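(* Let $b\in\mathcal E_1$ with $b-1$ flat at $0$, let $\theta$ be the inverse germ of $t\mapsto t\,b(t)$, write $\theta(x)=x\,c(x)$, and let $\sigma(x)=\theta(x)^4$, $\sigma^n$ its $n$-th iterate ($\sigma^0=\mathrm{id}$). Then the product $\Big(\prod_{n=0}^{\infty}c(\sigma^n(x))^{1/4^n}\Big)^{1/2}$ converges uniformly on some neighbourhood of $0$.
   Context: $\mathcal E_1$ denotes the ring of smooth function germs at $0\in\mathbb R$. A germ is flat at $0$ if all its derivatives (including its value) vanish at $0$. *)

From Stdlib Require Import Reals.
From Coquelicot Require Import Coquelicot.
Open Scope R_scope.

(* f is C^infinity on an open neighbourhood of a (a representative of a germ in E_1). *)
Definition smooth_near (f : R -> R) (a : R) : Prop :=
  exists eps, 0 < eps /\ forall (n : nat) (x : R), Rabs (x - a) < eps -> ex_derive_n f n x.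

Definition flat_at (f : R -> R) (a : R) : Prop :=
  forall n : nat, Derive_n f n a = 0.

Fixpoint partial_prod (u : nat -> R) (N : nat) : R :=
  match N with
  | O => 1
  | S N' => partial_prod u N' * u N'
  end.

Definition unif_cvg_on (U : R -> Prop) (f : nat -> R -> R) (g : R -> R) : Prop :=
  forall eps, 0 < eps -> exists N0 : nat, forall (N : nat) (x : R),
    (N0 <= N)%nat -> U x -> Rabs (f N x - g x) < eps.

(* Since theta(y) b(theta(y)) = y and theta(y) = y c(y), we have c(y) b(y c(y)) = 1
   for small y <> 0, so c(0) = 1 by continuity and 1/2 < c < 3/2 near 0.  There
   |sigma(y)| = |y|^4 |c(y)|^4 <= |y| as long as |y| <= 1/2, so every iterate of
   sigma stays in a small ball and |ln c(sigma^n x)| < ln 2.  The logarithm of the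
   product is thus a series dominated by ln 2 * 4^-n, hence uniformly convergent,
   and exp preserves uniform convergence of uniformly bounded sequences; the square
   root is the exponential of half the same series. *)

From Stdlib Require Import Reals Lra Lia.
From Coquelicot Require Import Coquelicot.
Open Scope R_scope.

(* [N] terms, like [partial_prod]; Coquelicot's [sum_n a N] has [N + 1]. *)
Fixpoint partial_sum (a : nat -> R) (N : nat) : R :=
  match N with
  | O => 0
  | S N' => partial_sum a N' + a N'
  end.

Lemma partial_prod_exp (a : nat -> R) (N : nat) :
  partial_prod (fun n => exp (a n)) N = exp (partial_sum a N).
Proof.
  induction N as [|N IH]; simpl; [now rewrite exp_0|].
  now rewrite IH, exp_plus.
Qed.

Lemma partial_sum_scal (k : R) (a : nat -> R) (N : nat) :
  partial_sum (fun n => k * a n) N = k * partial_sum a N.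
Proof. induction N as [|N IH]; simpl; [ring|rewrite IH; ring]. Qed.

Lemma Series_partial_sum_tail (a : nat -> R) (N : nat) :
  ex_series a -> Series a = partial_sum a N + Series (fun k => a (N + k)%nat).
Proof.
  intros Ha. induction N as [|N IH]; simpl.
  - rewrite Rplus_0_l. now apply Series_ext.
  - rewrite IH, Series_incr_1, Rplus_assoc, Nat.add_0_r.
    + do 2 f_equal. apply Series_ext. intros k. f_equal. lia.
    + now apply ex_series_incr_n.
Qed.

Section GeometricDomination.

Variable q : R.
Hypothesis Hq : 0 <= q < 1.

Lemma is_series_geom_scal (M : R) : is_series (fun n => M * q ^ n) (M / (1 - q)).
Proof.
  apply (is_series_scal_l M (fun n => q ^ n)), is_series_geom.
  rewrite Rabs_pos_eq; lra.
Qed.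

Lemma ex_series_Rabs_geom_dom (M : R) (a : nat -> R) :
  (forall n, Rabs (a n) <= M * q ^ n) -> ex_series (fun n => Rabs (a n)).
Proof.
  intros Ha. apply (@ex_series_le R_AbsRing R_CompleteNormedModule _ (fun n => M * q ^ n)).
  - intros n. change (Rabs (Rabs (a n)) <= M * q ^ n). now rewrite Rabs_Rabsolu.
  - eexists. apply is_series_geom_scal.
Qed.

Lemma Rabs_Series_geom_dom (M : R) (a : nat -> R) :
  (forall n, Rabs (a n) <= M * q ^ n) -> Rabs (Series a) <= M / (1 - q).
Proof.
  intros Ha. eapply Rle_trans.
  - now apply Series_Rabs, (ex_series_Rabs_geom_dom M).
  - rewrite <- (is_series_unique _ _ (is_series_geom_scal M)).
    apply Series_le; [|eexists; apply is_series_geom_scal].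
    intros n. split; [apply Rabs_pos|apply Ha].
Qed.

Lemma Rabs_partial_sum_Series_geom_dom (M : R) (a : nat -> R) (N : nat) :
  (forall n, Rabs (a n) <= M * q ^ n) ->
  Rabs (partial_sum a N - Series a) <= M * q ^ N / (1 - q).
Proof.
  intros Ha.
  rewrite (Series_partial_sum_tail a N)
    by now apply ex_series_Rabs, (ex_series_Rabs_geom_dom M).
  replace (partial_sum a N - _) with (- Series (fun k => a (N + k)%nat)) by ring.
  rewrite Rabs_Ropp. apply Rabs_Series_geom_dom.
  intros k. rewrite Rmult_assoc, <- pow_add. apply Ha.
Qed.

Lemma unif_cvg_partial_sum_geom_dom (U : R -> Prop) (M : R) (a : R -> nat -> R) :
  (forall x n, U x -> Rabs (a x n) <= M * q ^ n) ->
  unif_cvg_on U (fun N x => partial_sum (a x) N) (fun x => Series (a x)).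
Proof.
  intros Ha eps Heps.
  assert (HM : 0 < Rabs M + 1) by (pose proof (Rabs_pos M); lra).
  destruct (pow_lt_1_zero q) with (y := eps * (1 - q) / (Rabs M + 1))
    as [N0 HN0].
  { rewrite Rabs_pos_eq; lra. }
  { apply Rdiv_lt_0_compat; [apply Rmult_lt_0_compat|]; lra. }
  exists N0. intros N x HN Ux.
  eapply Rle_lt_trans.
  { apply (Rabs_partial_sum_Series_geom_dom M). intros n. now apply Ha. }
  specialize (HN0 N HN). rewrite Rabs_pos_eq in HN0 by (apply pow_le; lra).
  apply Rmult_lt_compat_r with (r := Rabs M + 1) in HN0; [|lra].
  replace (eps * (1 - q) / (Rabs M + 1) * (Rabs M + 1)) with (eps * (1 - q))
    in HN0 by (field; lra).
  apply (Rmult_lt_reg_r (1 - q)); [lra|].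
  replace (M * q ^ N / (1 - q) * (1 - q)) with (M * q ^ N) by (field; lra).
  assert (0 <= q ^ N) by (apply pow_le; lra).
  pose proof (Rle_abs M). nra.
Qed.

End GeometricDomination.

Lemma exp_lipschitz_le (B u v : R) :
  Rabs u <= B -> Rabs v <= B -> Rabs (exp u - exp v) <= exp B * Rabs (u - v).
Proof.
  intros Hu Hv.
  destruct (MVT_abs exp exp v u) as [w [-> Hw]].
  { intros w _. apply derivable_pt_lim_exp. }
  apply Rmult_le_compat_r; [apply Rabs_pos|].
  rewrite Rabs_pos_eq by (left; apply exp_pos).
  apply Rabs_le_between in Hu, Hv.
  assert (HwB : w <= B) by (pose proof (Rmax_lub v u B); lra).
  destruct (Rle_lt_or_eq_dec w B HwB) as [lt | ->]; [left; now apply exp_increasing|lra].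
Qed.

Lemma unif_cvg_ext (U : R -> Prop) (f g : nat -> R -> R) (h : R -> R) :
  (forall N x, U x -> f N x = g N x) -> unif_cvg_on U g h -> unif_cvg_on U f h.
Proof.
  intros Efg Hg eps Heps. destruct (Hg eps Heps) as [N0 HN0]. exists N0.
  intros N x HN Ux. rewrite Efg by exact Ux. now apply HN0.
Qed.

Lemma unif_cvg_exp (U : R -> Prop) (f : nat -> R -> R) (g : R -> R) (B : R) :
  (forall x, U x -> Rabs (g x) <= B) ->
  unif_cvg_on U f g -> unif_cvg_on U (fun N x => exp (f N x)) (fun x => exp (g x)).
Proof.
  intros Hg Hfg eps Heps.
  (* Once [f N x] is within 1 of [g x], both lie where exp is [exp (B + 1)]-Lipschitz. *)
  assert (HE : 0 < exp (B + 1)) by apply exp_pos.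
  destruct (Hfg (Rmin 1 (eps / exp (B + 1)))) as [N0 HN0].
  { apply Rmin_pos; [lra|]. now apply Rdiv_lt_0_compat. }
  exists N0. intros N x HN Ux.
  specialize (HN0 N x HN Ux). specialize (Hg x Ux).
  pose proof (Rmin_l 1 (eps / exp (B + 1))) as Hmin1.
  pose proof (Rmin_r 1 (eps / exp (B + 1))) as Hmin2.
  eapply Rle_lt_trans; [apply (exp_lipschitz_le (B + 1))|].
  - pose proof (Rabs_triang_inv (f N x) (g x)). lra.
  - lra.
  - apply Rmult_lt_compat_l with (r := exp (B + 1)) in HN0; [|exact HE].
    assert (exp (B + 1) * Rmin 1 (eps / exp (B + 1)) <= eps).
    { replace eps with (exp (B + 1) * (eps / exp (B + 1))) at 2 by (field; lra).
      apply Rmult_le_compat_l; lra. }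
    lra.
Qed.

Lemma unif_cvg_exp_partial_sum_geom_dom (U : R -> Prop) (q M : R) (a : R -> nat -> R) :
  0 <= q < 1 -> (forall x n, U x -> Rabs (a x n) <= M * q ^ n) ->
  unif_cvg_on U (fun N x => exp (partial_sum (a x) N)) (fun x => exp (Series (a x))).
Proof.
  intros Hq Ha. apply (unif_cvg_exp _ _ _ (M / (1 - q))).
  - intros x Ux. apply (Rabs_Series_geom_dom q Hq). intros n. now apply Ha.
  - now apply (unif_cvg_partial_sum_geom_dom q Hq U M).
Qed.

Lemma sqrt_exp (x : R) : sqrt (exp x) = exp (/ 2 * x).
Proof.
  rewrite <- (sqrt_square (exp (/ 2 * x))) by (left; apply exp_pos).
  rewrite <- exp_plus. do 2 f_equal. field.
Qed.

Lemma Rabs_ln_lt_ln2 (z : R) : 1 / 2 < z < 2 -> Rabs (ln z) < ln 2.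
Proof.
  intros Hz. apply Rabs_def1.
  - apply ln_increasing; lra.
  - rewrite <- ln_Rinv by lra. apply ln_increasing; lra.
Qed.

Lemma Rabs_pow4_mul_le (y z : R) :
  Rabs y <= 1 / 2 -> Rabs z <= 3 / 2 -> Rabs ((y * z) ^ 4) <= Rabs y.
Proof.
  rewrite <- RPow_abs, Rabs_mult.
  generalize (Rabs_pos y) (Rabs_pos z).
  generalize (Rabs y) (Rabs z). intros u v Hu0 Hv0 Hu Hv.
  assert (Hu3 : u ^ 3 <= (1 / 2) ^ 3) by (apply pow_incr; lra).
  assert (Hv4 : v ^ 4 <= (3 / 2) ^ 4) by (apply pow_incr; lra).
  assert (Hw : u ^ 3 * v ^ 4 <= 1).
  { apply Rle_trans with ((1 / 2) ^ 3 * (3 / 2) ^ 4); [|simpl; lra].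
    apply Rmult_le_compat; auto using pow_le. }
  replace ((u * v) ^ 4) with (u * (u ^ 3 * v ^ 4)) by ring.
  assert (0 <= u ^ 3 * v ^ 4) by (apply Rmult_le_pos; apply pow_le; lra).
  nra.
Qed.

Lemma continuous_eps_delta (f : R -> R) (x eps : R) :
  continuous f x -> 0 < eps ->
  exists d, 0 < d /\ forall y, Rabs (y - x) < d -> Rabs (f y - f x) < eps.
Proof.
  intros Hf Heps.
  apply continuity_pt_filterlim in Hf. rewrite continuity_pt_locally in Hf.
  destruct (Hf (mkposreal eps Heps)) as [d Hd].
  exists d. split; [apply cond_pos|]. intros y Hy. now apply (Hd y).
Qed.

Lemma continuous_punctured_const (f : R -> R) (a v r : R) :
  continuous f a -> 0 < r -> (forall y, 0 < Rabs (y - a) < r -> f y = v) -> f a = v.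
Proof.
  intros Hf Hr Hv. destruct (Req_dec (f a) v) as [|Hne]; [assumption|exfalso].
  destruct (continuous_eps_delta f a (Rabs (v - f a)) Hf) as [d [Hd Hfd]].
  { apply Rabs_pos_lt. lra. }
  set (y := a + Rmin d r / 2).
  assert (Hy : Rabs (y - a) = Rmin d r / 2).
  { unfold y. replace (a + Rmin d r / 2 - a) with (Rmin d r / 2) by ring.
    apply Rabs_pos_eq. pose proof (Rmin_pos d r Hd Hr). lra. }
  pose proof (Rmin_l d r). pose proof (Rmin_r d r). pose proof (Rmin_pos d r Hd Hr).
  specialize (Hfd y ltac:(lra)). rewrite Hv in Hfd by lra. lra.
Qed.

Lemma smooth_near_continuous (f : R -> R) (a : R) : smooth_near f a -> continuous f a.
Proof.
  intros [eps [Heps Hf]]. apply (@ex_derive_continuous R_AbsRing R_NormedModule).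
  apply (Hf 1%nat a). now rewrite Rminus_eq_0, Rabs_R0.
Qed.

Section InverseGerm.

Variables (b theta c : R -> R) (r : R).
Hypotheses (Hb : continuous b 0) (Hb0 : b 0 = 1) (Hc : continuous c 0) (Hr : 0 < r).
Hypothesis Hinv : forall x, Rabs x < r -> theta x * b (theta x) = x.
Hypothesis Htheta : forall x, Rabs x < r -> theta x = x * c x.

Lemma factor_at_0 : c 0 = 1.
Proof.
  assert (Hg : continuous (fun y => c y * b (y * c y)) 0).
  { apply (continuous_mult c (fun y => b (y * c y))); [exact Hc|].
    apply (continuous_comp (fun y => y * c y) b).
    - apply (continuous_mult (fun y => y) c); [apply continuous_id|exact Hc].
    - now rewrite Rmult_0_l. }
  apply continuous_punctured_const with (r := r) (v := 1) in Hg; [|exact Hr|].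
  - now rewrite Rmult_0_l, Hb0, Rmult_1_r in Hg.
  - intros y Hy. rewrite Rminus_0_r in Hy.
    apply (Rmult_eq_reg_l y); [|intros ->; rewrite Rabs_R0 in Hy; lra].
    rewrite <- Rmult_assoc, <- Htheta by lra. rewrite Rmult_1_r. apply Hinv. lra.
Qed.

Lemma factor_bounds_near_0 :
  exists delta, 0 < delta /\ delta <= r /\ delta <= 1 / 2 /\
    forall y, Rabs y < delta -> 1 / 2 < c y < 3 / 2.
Proof.
  destruct (continuous_eps_delta c 0 (1 / 2) Hc) as [d [Hd Hcd]]; [lra|].
  exists (Rmin d (Rmin r (1 / 2))).
  pose proof (Rmin_l d (Rmin r (1 / 2))). pose proof (Rmin_r d (Rmin r (1 / 2))).
  pose proof (Rmin_l r (1 / 2)). pose proof (Rmin_r r (1 / 2)).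
  split; [repeat apply Rmin_pos; lra|].
  split; [lra|]. split; [lra|].
  intros y Hy. specialize (Hcd y). rewrite Rminus_0_r, factor_at_0 in Hcd.
  apply Rabs_lt_between in Hcd; lra.
Qed.

Lemma Rabs_ln_factor_iter_lt :
  exists delta, 0 < delta /\ forall x n, Rabs x < delta ->
    Rabs (ln (c (Nat.iter n (fun y => theta y ^ 4) x))) < ln 2.
Proof.
  destruct factor_bounds_near_0 as [delta [Hdelta [Hdr [Hd2 Hcd]]]].
  exists delta. split; [exact Hdelta|]. intros x n Hx.
  assert (Hball : forall y, Rabs y < delta -> Rabs (theta y ^ 4) < delta).
  { intros y Hy. specialize (Hcd y Hy). rewrite Htheta by lra.
    eapply Rle_lt_trans; [apply Rabs_pow4_mul_le|exact Hy]; [lra|].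
    rewrite Rabs_pos_eq; lra. }
  apply Rabs_ln_lt_ln2.
  assert (Hn : Rabs (Nat.iter n (fun y => theta y ^ 4) x) < delta)
    by now apply Nat.iter_invariant.
  specialize (Hcd _ Hn). lra.
Qed.

End InverseGerm.

Theorem lemma3p9 (b theta c : R -> R) :
  smooth_near b 0 ->
  flat_at (fun t => b t - 1) 0 ->
  (* theta is the inverse germ of t |-> t * b t *)
  (exists r, 0 < r /\
     (forall t, Rabs t < r -> theta (t * b t) = t) /\
     (forall x, Rabs x < r -> theta x * b (theta x) = x)) ->
  (* theta x = x * c x with c in E_1 *)
  smooth_near c 0 ->
  (exists r, 0 < r /\ forall x, Rabs x < r -> theta x = x * c x) ->
  let sigma := fun x => (theta x) ^ 4 in
  let term := fun (x : R) (n : nat) => Rpower (c (Nat.iter n sigma x)) (/ 4 ^ n) in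
  exists delta, 0 < delta /\
    exists P F : R -> R,
      unif_cvg_on (fun x => Rabs x < delta) (fun N x => partial_prod (term x) N) P /\
      unif_cvg_on (fun x => Rabs x < delta) (fun N x => sqrt (partial_prod (term x) N)) F.
Proof.
  intros Hb Hflat [ri [Hri [_ Hinv]]] Hc [rc [Hrc Htheta]] sigma term.
  assert (Hb0 : b 0 = 1) by (specialize (Hflat 0%nat); simpl in Hflat; lra).
  destruct (Rabs_ln_factor_iter_lt b theta c (Rmin ri rc) (smooth_near_continuous b 0 Hb)
              Hb0 (smooth_near_continuous c 0 Hc) (Rmin_pos ri rc Hri Hrc))
    as [delta [Hdelta Hln]].
  { intros x Hx. apply Hinv. pose proof (Rmin_l ri rc). lra. }
  { intros x Hx. apply Htheta. pose proof (Rmin_r ri rc). lra. }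
  set (a := fun x n => / 4 ^ n * ln (c (Nat.iter n sigma x))).
  assert (Ha : forall x n, Rabs x < delta -> Rabs (a x n) <= ln 2 * (/ 4) ^ n).
  { intros x n Hx. unfold a.
    rewrite Rabs_mult, <- pow_inv, Rabs_pos_eq, Rmult_comm by (apply pow_le; lra).
    apply Rmult_le_compat_r; [apply pow_le; lra|]. left. now apply Hln. }
  assert (Hterm : forall x N, partial_prod (term x) N = exp (partial_sum (a x) N))
    by (intros; apply partial_prod_exp).
  exists delta. split; [exact Hdelta|].
  exists (fun x => exp (Series (a x))), (fun x => exp (Series (fun n => / 2 * a x n))).
  split.
  - apply (unif_cvg_ext _ _ (fun N x => exp (partial_sum (a x) N))).
    + intros N x _. apply Hterm.
    + apply (unif_cvg_exp_partial_sum_geom_dom _ (/ 4) (ln 2)); [lra|exact Ha].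
  - apply (unif_cvg_ext _ _ (fun N x => exp (partial_sum (fun n => / 2 * a x n) N))).
    + intros N x _. now rewrite Hterm, partial_sum_scal, sqrt_exp.
    + apply (unif_cvg_exp_partial_sum_geom_dom _ (/ 4) (/ 2 * ln 2)); [lra|].
      intros x n Hx. rewrite Rabs_mult, Rmult_assoc, Rabs_pos_eq by lra.
      apply Rmult_le_compat_l; [lra|]. now apply Ha.
Qed.
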